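(* Let $q$ be an indeterminate (with square root $q^{1/2}$) and put $X_n=\frac{[n][n+1]}{q^n}$ for $n\geq 0$. For integers $k,m$ define the polynomials \begin{align*} c_{k,m}(q)&=h_{2m-k}(\{1,q^2\}^{k-m+1})+q\,h_{2m-k-1}(\{1,q^2\}^{k-m+1}),\\ g_{k,m}(q)&=h_{2m-k}(\{1\}^{k-m+1},\{q\}^{k-m})+h_{2m-k}(\{1\}^{k-m},\{q\}^{k-m+1}),\\ d_{k,m}(q)&=g_{k,m}(q^2)+q\,g_{k-1,m-1}(q^2). \end{align*} Then for all integers $m,l\geq1$, with all sums over integers $k\ge 0$ (only finitely many terms are nonzero): \begin{align*} X_l^{m+1}-X_{l-1}^{m+1}&=\sum_k h_{m-2k}(\{1,q\}^{k+1})\,[2l]\,[l]^{2(m-k)}q^{-l(m-k+1)},\\ \frac{1-q^{l+\frac12}}{(1-q^{\frac12})q^{\frac l2}}X_l^m-\frac{1-q^{l-\frac12}}{(1-q^{\frac12})q^{\frac{l-1}{2}}}X_{l-1}^m&=\sum_k c_{m,m-k}(q^{\frac12})\,[2l]\,[l]^{2(m-k)-1}q^{-l(m-k+\frac12)},\\ X_l^m+X_{l-1}^m&=\sum_k g_{m,m-k}(q)\,[l]^{2(m-k)}q^{-l(m-k)},\\ \frac{1-q^{l+\frac12}}{(1-q^{\frac12})q^{\frac l2}}X_l^{m-1}+\frac{1-q^{l-\frac12}}{(1-q^{\frac12})q^{\frac{l-1}{2}}}X_{l-1}^{m-1}&=\sum_k d_{m,m-k}(q^{\frac12})\,[l]^{2(m-k)-1}q^{-l(m-k-\frac12)}.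 \end{align*}
   Context: For an integer $k\ge0$, $[k]=\frac{1-q^k}{1-q}$. For integers $r,s\geq0$, $h_n(\{1\}^r,\{x\}^s)$ is defined by $\sum_{n\geq0}h_n(\{1\}^r,\{x\}^s)z^n=\frac{1}{(1-z)^r(1-xz)^s}$ (so $h_n=0$ for $n<0$), with the convention $h_n(\{1\}^r,\{x\}^s)=0$ if $r<0$ or $s<0$. One writes $h_n(\{1,x\}^r)$ for $h_n(\{1\}^r,\{x\}^r)$. The notation $c_{m,m-k}(q^{1/2})$ etc. means the polynomial $c_{m,m-k}$ evaluated at $q^{1/2}$. *)

From HB Require Import structures.
From mathcomp Require Import all_boot all_order all_algebra.
From mathcomp Require Import fraction.
Set Implicit Arguments. Unset Strict Implicit. Unset Printing Implicit Defensive.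
Import Order.TTheory GRing.Theory Num.Theory.
Local Open Scope ring_scope.

(* Complete homogeneous symmetric function h_n evaluated at the (multi)list s
   of values: coefficient of z^n in prod_{x in s} 1/(1 - x z), computed as the
   Cauchy product of the geometric series sum_j x^j z^j. *)
Definition hlist (R : comPzRingType) (s : seq R) : nat -> R :=
  foldr (fun x (f : nat -> R) => fun n => \sum_(j < n.+1) x ^+ j * f (n - j)%N)
        (fun n => (n == 0%N)%:R) s.

(* h_n({1}^r,{x}^s), with the convention h_n = 0 if n < 0, r < 0 or s < 0. *)
Definition hh (R : comPzRingType) (n r s : int) (x : R) : R :=
  if (n < 0) || (r < 0) || (s < 0) then 0
  else hlist (nseq `|r|%N 1 ++ nseq `|s|%N x) `|n|%N.

Definition qbr (F : fieldType) (q : F) (k : nat) : F := (1 - q ^+ k) / (1 - q).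

Definition Xn (F : fieldType) (q : F) (n : nat) : F :=
  qbr q n * qbr q n.+1 / q ^+ n.

Definition cpol (R : comPzRingType) (k m : int) (y : R) : R :=
  hh (2 * m - k) (k - m + 1) (k - m + 1) (y ^+ 2)
  + y * hh (2 * m - k - 1) (k - m + 1) (k - m + 1) (y ^+ 2).

Definition gpol (R : comPzRingType) (k m : int) (y : R) : R :=
  hh (2 * m - k) (k - m + 1) (k - m) y + hh (2 * m - k) (k - m) (k - m + 1) y.

Definition dpol (R : comPzRingType) (k m : int) (y : R) : R :=
  gpol k m (y ^+ 2) + y * gpol (k - 1) (m - 1) (y ^+ 2).

(* The field of rational functions Q(t); t plays the role of q^{1/2}. *)
Definition RatFun := {fraction {poly rat}}.
Definition tind : RatFun := @FracField.tofrac {poly rat} 'X.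

(* Put V = [l] / q^{l/2}.  X_l and X_{l-1} are the two roots of
   z^2 - (1 + q) V^2 z + (q V^4 - V^2), so every combination a X_l^m + b X_{l-1}^m
   satisfies u_{m+2} = (1 + q) V^2 u_{m+1} - (q V^4 - V^2) u_m.  Each right-hand side
   is of the form sum_k c_{m,k} V^{2(m-k)+e}, and satisfies the same recurrence as soon
   as c_{m+2,k+1} = (1 + q) c_{m+1,k+1} - q c_{m,k+1} + c_{m,k}.  For h_{m-2k}({1,q}^{k+1})
   and g_{m,m-k}(q) this is h_n(1,x,S) = h_n(S) + (1+x) h_{n-1}(1,x,S) - x h_{n-2}(1,x,S),
   i.e. multiplication of the generating function by (1 - z)(1 - x z); the polynomials
   c_{m,m-k}(q^{1/2}) and d_{m,m-k}(q^{1/2}) are combinations of such coefficients at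
   m and m - 1.  It remains to compare both sides at m = 0 and m = 1. *)

From HB Require Import structures.
From mathcomp Require Import all_boot all_order all_algebra.
From mathcomp Require Import fraction zify ring.
Import Order.TTheory GRing.Theory Num.Theory.
Local Open Scope ring_scope.
Set Implicit Arguments. Unset Strict Implicit.

Section CompleteHomogeneous.
Variable R : comPzRingType.
Implicit Types (a b c x : R) (s : seq R).

Lemma hlist_cons c s n : hlist (c :: s) n = \sum_(j < n.+1) c ^+ j * hlist s (n - j).
Proof. by []. Qed.

Lemma hlist0 s : hlist s 0 = 1.
Proof. by elim: s => [|c s IH] //; rewrite hlist_cons big_ord1 mul1r IH. Qed.

Lemma hlistS c s n : hlist (c :: s) n.+1 = hlist s n.+1 + c * hlist (c :: s) n.
Proof.
rewrite !hlist_cons big_ord_recl mul1r subn0 big_distrr; congr (_ + _).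
by apply: eq_bigr => j _; rewrite lift0 exprS subSS -mulrA.
Qed.

Lemma hlist_seq1 c n : hlist [:: c] n = c ^+ n.
Proof. by elim: n => [|n IH]; rewrite ?hlist0 // hlistS IH add0r exprS. Qed.

Lemma hlist1 s : hlist s 1 = \sum_(x <- s) x.
Proof.
elim: s => [|c s IH]; first by rewrite big_nil.
by rewrite hlistS IH hlist0 big_cons mulr1 addrC.
Qed.

Lemma hlist_cons2S a b s n :
  hlist [:: a, b & s] n.+2 =
  hlist s n.+2 + (a + b) * hlist [:: a, b & s] n.+1 - a * b * hlist [:: a, b & s] n.
Proof.
have hb : hlist (b :: s) n.+1 = hlist [:: a, b & s] n.+1 - a * hlist [:: a, b & s] n.
  by rewrite [hlist [:: a, b & s] n.+1]hlistS addrK.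
by rewrite hlistS [hlist (b :: s) _]hlistS hb; ring.
Qed.

Lemma hlist_swap a b s n : hlist [:: a, b & s] n = hlist [:: b, a & s] n.
Proof.
suff: hlist [:: a, b & s] n = hlist [:: b, a & s] n /\
      hlist [:: a, b & s] n.+1 = hlist [:: b, a & s] n.+1 by case.
elim: n => [|n [IH0 IH1]]; first by rewrite !hlist0 !hlist1 !big_cons addrCA.
by split=> //; rewrite !hlist_cons2S IH0 IH1; ring.
Qed.

Lemma eq_hlist_cons c s s' : hlist s =1 hlist s' -> hlist (c :: s) =1 hlist (c :: s').
Proof. by move=> eq_s n; rewrite !hlist_cons; apply: eq_bigr => j _; rewrite eq_s. Qed.

Lemma hlist_cat_cons x s1 s2 : hlist (s1 ++ x :: s2) =1 hlist (x :: s1 ++ s2).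
Proof.
elim: s1 => [|c s1 IH] n //.
by rewrite cat_cons (eq_hlist_cons c IH) hlist_swap.
Qed.


Lemma hh_neg (n r s : int) x : n < 0 -> hh n r s x = 0.
Proof. by rewrite /hh => ->. Qed.

Lemma hhE (n r s : nat) x : hh n r s x = hlist (nseq r 1 ++ nseq s x) n.
Proof. by []. Qed.

Lemma hh0 (r s : nat) x : hh 0%N r s x = 1.
Proof. exact: hlist0. Qed.

Lemma hh1 (r s : nat) x : hh 1%N r s x = r%:R + s%:R * x.
Proof. by rewrite hhE hlist1 big_cat !big_nseq !iter_addr !addr0 mulr_natl. Qed.

Lemma hh10 (n : nat) x : hh n 1 0 x = 1.
Proof. by rewrite hhE hlist_seq1 expr1n. Qed.

Lemma hh01 (n : nat) x : hh n 0 1 x = x ^+ n.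
Proof. by rewrite hhE hlist_seq1. Qed.

Lemma hhSS (n r s : nat) x :
  hh n r.+1 s.+1 x = hlist [:: 1, x & nseq r 1 ++ nseq s x] n.
Proof. exact: (eq_hlist_cons 1 (hlist_cat_cons x _ _)). Qed.

Lemma hh_rec (n : int) (r s : nat) x :
  hh n r.+1 s.+1 x =
  hh n r s x + (1 + x) * hh (n - 1) r.+1 s.+1 x - x * hh (n - 2) r.+1 s.+1 x.
Proof.
case: n => [[|[|n]]|n].
- rewrite [hh (_ - 1) _ _ _]hh_neg // [hh (_ - 2) _ _ _]hh_neg // !hh0; ring.
- rewrite [hh (_ - 2) _ _ _]hh_neg // subrr !hh1 hh0 -!natr1; ring.
- have -> : n.+2%:Z - 1 = n.+1 by lia.
  have -> : n.+2%:Z - 2 = n by lia.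
  by rewrite !hhSS hhE hlist_cons2S mul1r.
- by rewrite !hh_neg ?mulr0 ?subr0 ?addr0 //; lia.
Qed.
End CompleteHomogeneous.

Definition pascal_rec (R : pzRingType) (q : R) (c : nat -> nat -> R) : Prop :=
  [/\ forall m, c m.+2 0%N = (1 + q) * c m.+1 0%N - q * c m 0%N,
      forall m k, c m.+2 k.+1 = (1 + q) * c m.+1 k.+1 - q * c m k.+1 + c m k
    & forall m k, (m < k)%N -> c m k = 0].

Lemma pascal_rec_lincomb (R : comPzRingType) (q a : R) c1 c2 :
  pascal_rec q c1 -> pascal_rec q c2 -> pascal_rec q (fun m k => c1 m k + a * c2 m k).
Proof.
case=> [c1_0 c1_S c1_eq0] [c2_0 c2_S c2_eq0].
split=> [m|m k|m k lt_mk]; last by rewrite c1_eq0 ?c2_eq0 ?mulr0 ?addr0.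
- by rewrite c1_0 c2_0; ring.
- by rewrite c1_S c2_S; ring.
Qed.

Section Coefficients.
Variables (R : comPzRingType) (x : R).

Definition ecoef (m : int) (k : nat) : R :=
  hh (m - 2 * k%:Z) (k%:Z + 1) (k%:Z + 1) x.

Definition gcoef (m : int) (k : nat) : R :=
  hh (m - 2 * k%:Z) (k%:Z + 1) k x + hh (m - 2 * k%:Z) k (k%:Z + 1) x.

Lemma ecoef_eq0 m k : m < 2 * k%:Z -> ecoef m k = 0.
Proof. by move=> lt_m2k; rewrite /ecoef hh_neg // subr_lt0. Qed.

Lemma gcoef_eq0 m k : m < 2 * k%:Z -> gcoef m k = 0.
Proof. by move=> lt_m2k; rewrite /gcoef !hh_neg ?addr0 // subr_lt0. Qed.

Lemma ecoef_rec m m1 m2 k : m1 = m + 1 -> m2 = m + 2 ->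
  ecoef m2 k.+1 = (1 + x) * ecoef m1 k.+1 - x * ecoef m k.+1 + ecoef m k.
Proof.
move=> -> ->; rewrite /ecoef -!PoszD !addn1.
have -> : m + 2 - 2 * k.+1%:Z = m - 2 * k%:Z by lia.
have -> : m + 1 - 2 * k.+1%:Z = m - 2 * k%:Z - 1 by lia.
have -> : m - 2 * k.+1%:Z = m - 2 * k%:Z - 2 by lia.
by rewrite (hh_rec (m - 2 * k%:Z) k.+1 k.+1); ring.
Qed.

Lemma ecoef_rec0 m m1 m2 : m1 = m + 1 -> m2 = m + 2 -> m2 != 0 ->
  ecoef m2 0 = (1 + x) * ecoef m1 0 - x * ecoef m 0.
Proof.
move=> -> ->; set n := m + 2 => n_neq0.
have -> : m + 1 = n - 1 by rewrite /n; lia.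
have -> : m = n - 2 by rewrite /n; lia.
have hn00 : hh n 0%N 0%N x = 0 by case: n n_neq0 => [[|n]|n] // _; rewrite hh_neg.
by rewrite /ecoef !mulr0 !subr0 (hh_rec n 0 0) hn00; ring.
Qed.

Lemma gcoef_rec m m1 m2 k : m1 = m + 1 -> m2 = m + 2 ->
  gcoef m2 k.+1 = (1 + x) * gcoef m1 k.+1 - x * gcoef m k.+1 + gcoef m k.
Proof.
move=> -> ->; rewrite /gcoef -!PoszD !addn1.
have -> : m + 2 - 2 * k.+1%:Z = m - 2 * k%:Z by lia.
have -> : m + 1 - 2 * k.+1%:Z = m - 2 * k%:Z - 1 by lia.
have -> : m - 2 * k.+1%:Z = m - 2 * k%:Z - 2 by lia.
by rewrite (hh_rec (m - 2 * k%:Z) k.+1 k) (hh_rec (m - 2 * k%:Z) k k.+1); ring.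
Qed.

Lemma gcoefn0 (n : nat) : gcoef n 0 = 1 + x ^+ n.
Proof. by rewrite /gcoef mulr0 subr0 add0r hh10 hh01. Qed.

Lemma gcoef_rec0 m m1 m2 : m1 = m + 1 -> m2 = m + 2 -> 0 <= m ->
  gcoef m2 0 = (1 + x) * gcoef m1 0 - x * gcoef m 0.
Proof.
move=> -> ->; case: m => [n _|//]; rewrite -!PoszD !gcoefn0 !exprD; ring.
Qed.

Lemma ecoef00 : ecoef 0 0 = 1.
Proof. by rewrite /ecoef mulr0 subr0 add0r hh0. Qed.

Lemma ecoef10 : ecoef 1 0 = 1 + x.
Proof. by rewrite /ecoef mulr0 subr0 add0r hh1 mul1r. Qed.

Lemma gcoef21 : gcoef 2 1 = 2.
Proof. by rewrite /gcoef mulr1 subrr !hh0. Qed.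

Lemma ecoef_pascal : pascal_rec x (fun n => ecoef n).
Proof.
by split=> [n|n k|n k lt_nk]; [apply: ecoef_rec0 | apply: ecoef_rec | apply: ecoef_eq0]; lia.
Qed.

Lemma ecoef_pred_pascal : pascal_rec x (fun n => ecoef (n%:Z - 1)).
Proof.
by split=> [n|n k|n k lt_nk]; [apply: ecoef_rec0 | apply: ecoef_rec | apply: ecoef_eq0]; lia.
Qed.

Lemma gcoef_pascal : pascal_rec x (fun n => gcoef n).
Proof.
by split=> [n|n k|n k lt_nk]; [apply: gcoef_rec0 | apply: gcoef_rec | apply: gcoef_eq0]; lia.
Qed.

Lemma gcoef_succ_pascal : pascal_rec x (fun n => gcoef n.+1).
Proof.
by split=> [n|n k|n k lt_nk]; [apply: gcoef_rec0 | apply: gcoef_rec | apply: gcoef_eq0]; lia.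
Qed.

Lemma gpolE m k : gpol m (m - k%:Z) x = gcoef m k.
Proof. by rewrite /gpol /gcoef; congr (hh _ _ _ _ + hh _ _ _ _); lia. Qed.
End Coefficients.

Lemma cpolE (R : comPzRingType) (y : R) m k :
  cpol m (m - k%:Z) y = ecoef (y ^+ 2) m k + y * ecoef (y ^+ 2) (m - 1) k.
Proof. by rewrite /cpol /ecoef; congr (hh _ _ _ _ + _ * hh _ _ _ _); lia. Qed.

Lemma dpolE (R : comPzRingType) (y : R) m k :
  dpol m (m - k%:Z) y = gcoef (y ^+ 2) m k + y * gcoef (y ^+ 2) (m - 1) k.
Proof.
rewrite /dpol gpolE -[gcoef _ (m - 1) k]gpolE; congr (_ + _ * gpol _ _ _); lia.
Qed.

Lemma eq_linear_rec2 (R : pzRingType) (s p : R) (u v : nat -> R) :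
  (forall n, u n.+2 = s * u n.+1 - p * u n) ->
  (forall n, v n.+2 = s * v n.+1 - p * v n) ->
  u 0%N = v 0%N -> u 1%N = v 1%N -> u =1 v.
Proof.
move=> uS vS u0 u1 n; suff: u n = v n /\ u n.+1 = v n.+1 by case.
by elim: n => [|n [un un1]]; split; rewrite // uS vS un un1.
Qed.

Section WeightedSum.
Variables (F : fieldType) (q V : F) (e : int) (c : nat -> nat -> F).
Hypotheses (V_neq0 : V != 0) (c_pascal : pascal_rec q c).

Local Notation w m k := (V ^ (2 * (m%:Z - k%:Z) + e)).

Definition wsum (m : nat) : F := \sum_(k < m.+1) c m k * w m k.

Lemma wsum0 : wsum 0 = c 0%N 0%N * V ^ e.
Proof. by rewrite /wsum big_ord1 subrr mulr0 add0r. Qed.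

Lemma wsum1 : wsum 1 = c 1%N 0%N * V ^ (2 + e) + c 1%N 1%N * V ^ e.
Proof. by rewrite /wsum big_ord_recr big_ord1 /= subr0 mulr1 subrr mulr0 add0r. Qed.

Lemma wsum_widen m d : wsum m = \sum_(k < m.+1 + d) c m k * w m k.
Proof.
have [_ _ c_eq0] := c_pascal.
rewrite /wsum (big_ord_widen _ (fun k => c m k * w m k) (leq_addr d m.+1)) big_mkcond.
by apply: eq_bigr => k _; case: ltnP => // le_mk; rewrite c_eq0 ?mul0r.
Qed.

Lemma wsum_rec m :
  wsum m.+2 = (1 + q) * V ^+ 2 * wsum m.+1 - (q * V ^+ 4 - V ^+ 2) * wsum m.
Proof.
have [c_0 c_S _] := c_pascal.
have wS i k : w i.+1 k = w i k * V ^+ 2.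
  by rewrite -[V ^+ 2]/(V ^ 2%:Z) -expfzDr //; congr (_ ^ _); lia.
have wSS i k : w i.+1 k.+1 = w i k by congr (_ ^ _); lia.
rewrite mulrBl (wsum_widen m.+1 1) {1}(wsum_widen m 2) (wsum_widen m 1) !addn1 addn2 /wsum.
rewrite !(big_ord_recl m.+2).
have termS (k : 'I_m.+2) : c m.+2 (lift ord0 k) * w m.+2 (lift ord0 k) =
    (1 + q) * V ^+ 2 * (c m.+1 (lift ord0 k) * w m.+1 (lift ord0 k))
    - q * V ^+ 4 * (c m (lift ord0 k) * w m (lift ord0 k)) + V ^+ 2 * (c m k * w m k).
  by rewrite !lift0 c_S -[w m k](wSS m k) !wS; ring.
rewrite (eq_bigr _ (fun k _ => termS k)) big_split sumrB /= -!mulr_sumr c_0 !wS; ring.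
Qed.

Lemma power_sum_wsum (a b al be f : F) :
  al + be = (1 + q) * V ^+ 2 -> al * be = q * V ^+ 4 - V ^+ 2 ->
  a + b = f * wsum 0 -> a * al + b * be = f * wsum 1 ->
  forall m, a * al ^+ m + b * be ^+ m = f * wsum m.
Proof.
move=> sum_ab prod_ab e0 e1; apply: (eq_linear_rec2 (s := al + be) (p := al * be)).
- by move=> n; rewrite !exprS; ring.
- by move=> n; rewrite wsum_rec sum_ab prod_ab; ring.
- by rewrite !expr0 !mulr1.
- by rewrite !expr1.
Qed.
End WeightedSum.

Lemma expz_div (F : fieldType) (a u : F) (l : nat) (z : int) :
  (a / u ^+ l) ^ z = a ^ z * u ^ (- (l%:Z * z)).
Proof. by rewrite expfzMl exprz_inv -[u ^+ l]/(u ^ l%:Z) exprz_exp mulrN. Qed.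

Lemma expz_sqr (R : unitRingType) (x : R) (z : int) : (x ^+ 2) ^ z = x ^ (2 * z).
Proof. by rewrite -exprz_exp. Qed.

Section QIdentities.
Variables (F : fieldType) (t : F) (n : nat).
Hypotheses (t_neq0 : t != 0) (subql_neq0 : 1 - t ^+ (2 * n.+1) != 0).

Local Notation l := n.+1.
Local Notation q := (t ^+ 2).
Local Notation P := (t ^+ n).
Local Notation V := (qbr q l / t ^+ l).
Local Notation A := ((1 - t ^+ (2 * l + 1)) / ((1 - t) * t ^+ l)).
Local Notation B := ((1 - t ^+ (2 * l - 1)) / ((1 - t) * t ^+ (l - 1))).

Let qnE : q ^+ n = P ^+ 2. Proof. exact: exprAC. Qed.
Let qlE : q ^+ l = q * P ^+ 2. Proof. by rewrite exprS qnE. Qed.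
Let qlSE : q ^+ l.+1 = q ^+ 2 * P ^+ 2. Proof. by rewrite exprS qlE mulrA. Qed.
Let q2lE : q ^+ (2 * l) = (q * P ^+ 2) ^+ 2. Proof. by rewrite mulnC exprM qlE. Qed.
Let tlE : t ^+ l = t * P. Proof. exact: exprS. Qed.
Let tAE : t ^+ (2 * l + 1) = t * q * P ^+ 2. Proof. by rewrite addn1 exprS exprM qlE mulrA. Qed.
Let tBE : t ^+ (2 * l - 1) = t * P ^+ 2. Proof. by rewrite mulnS add2n subn1 /= exprS exprM qnE. Qed.
Let tl1E : t ^+ (l - 1) = P. Proof. by rewrite subn1. Qed.

Let q_neq1 : q != 1.
Proof. by apply: contra subql_neq0 => /eqP q1; rewrite exprM q1 expr1n subrr. Qed.
Let subt_neq0 : 1 - t != 0.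
Proof. by apply: contra q_neq1; rewrite subr_eq0 => /eqP <-; rewrite expr1n. Qed.
Let addt_neq0 : 1 + t != 0.
Proof. by apply: contra q_neq1; rewrite addrC addr_eq0 => /eqP ->; rewrite sqrrN expr1n. Qed.
Let P_neq0 : P != 0. Proof. exact: expf_neq0. Qed.
Let subq_neq0 : 1 - q != 0. Proof. by rewrite subr_eq0 eq_sym. Qed.
Let subqP_neq0 : 1 - q * P ^+ 2 != 0. Proof. by rewrite -qlE -exprM. Qed.

Local Ltac qfield := rewrite /Xn /qbr ?q2lE ?qlSE ?qlE ?qnE ?tAE ?tBE ?tl1E ?tlE; field;
  by rewrite ?exprMn ?P_neq0 ?t_neq0 ?subq_neq0 ?subt_neq0 ?addt_neq0 ?subqP_neq0.

Lemma Xn_add : Xn q l + Xn q n = (1 + q) * V ^+ 2.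
Proof. qfield. Qed.

Lemma Xn_mul : Xn q l * Xn q n = q * V ^+ 4 - V ^+ 2.
Proof. qfield. Qed.

Lemma Xn_sub : Xn q l - Xn q n = qbr q (2 * l) / q ^+ l.
Proof. qfield. Qed.

Lemma AB_sub : A - B = (Xn q l - Xn q n) / V.
Proof. qfield. Qed.

Lemma AB_Xn_sub : A * Xn q l - B * Xn q n = (Xn q l - Xn q n) * ((1 + t + q) * V).
Proof. qfield. Qed.

Lemma AB_add : A + B = (1 + t) ^+ 2 * V.
Proof. qfield. Qed.

Lemma AB_Xn_add : A * Xn q l + B * Xn q n = (1 + t + t ^+ 3 + q ^+ 2) * V ^+ 3 + 2 * V.
Proof. qfield. Qed.

Lemma qbr_scaled_neq0 : V != 0.
Proof. by rewrite /qbr qlE !mulf_neq0 ?invr_eq0 ?expf_neq0. Qed.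

Let expz_subl (w : int) : t ^ (w - 2 * l%:Z) = t ^ w / q ^+ l.
Proof. by rewrite expfzDr // -exprM -[t ^+ (2 * l)]/(t ^ (2 * l)%N) invr_expz PoszM. Qed.

Lemma Xn_pow_sub m :
  Xn q l ^+ m.+1 - Xn q n ^+ m.+1 =
  \sum_(0 <= k < m.+1)
    hh (m%:Z - 2 * k%:Z) (k%:Z + 1) (k%:Z + 1) q * qbr q (2 * l)
    * qbr q l ^ (2 * (m%:Z - k%:Z)) * q ^ (- (l%:Z * (m%:Z - k%:Z + 1))).
Proof.
have e0 : Xn q l + - Xn q n = (Xn q l - Xn q n) * wsum V 0 (fun i => ecoef q i) 0.
  by rewrite wsum0 /= ecoef00 !mulr1.
have e1 : Xn q l * Xn q l + - Xn q n * Xn q n =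
          (Xn q l - Xn q n) * wsum V 0 (fun i => ecoef q i) 1.
  rewrite wsum1 /= ecoef10 ecoef_eq0 // mul0r !addr0.
  by rewrite -[V ^ 2]/(V ^+ 2) -Xn_add; ring.
have -> : Xn q l ^+ m.+1 - Xn q n ^+ m.+1 = Xn q l * Xn q l ^+ m + - Xn q n * Xn q n ^+ m.
  by rewrite !(exprS _ m) mulNr.
rewrite (power_sum_wsum qbr_scaled_neq0 (ecoef_pascal q) Xn_add Xn_mul e0 e1).
rewrite big_mkord mulr_sumr; apply: eq_bigr => k _.
rewrite Xn_sub addr0 expz_div expz_sqr -[hh _ _ _ _]/(ecoef q m k).
have -> : 2 * - (l%:Z * (m%:Z - k%:Z + 1)) = - (l%:Z * (2 * (m%:Z - k%:Z))) - 2 * l%:Z by lia.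
by rewrite expz_subl; ring.
Qed.

Lemma AB_Xn_pow_sub m :
  A * Xn q l ^+ m - B * Xn q n ^+ m =
  \sum_(0 <= k < m.+1)
    cpol m%:Z (m%:Z - k%:Z) t * qbr q (2 * l)
    * qbr q l ^ (2 * (m%:Z - k%:Z) - 1) * t ^ (- (l%:Z * (2 * (m%:Z - k%:Z) + 1))).
Proof.
pose c (i k : nat) := ecoef q i k + t * ecoef q (i%:Z - 1) k.
have c_pascal : pascal_rec q c := pascal_rec_lincomb t (ecoef_pascal q) (ecoef_pred_pascal q).
have e0 : A + - B = (Xn q l - Xn q n) * wsum V (-1) c 0.
  by rewrite wsum0 /c ecoef00 ecoef_eq0 // mulr0 addr0 mul1r exprN1 AB_sub.
have e1 : A * Xn q l + - B * Xn q n = (Xn q l - Xn q n) * wsum V (-1) c 1.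
  rewrite wsum1 /c subrr ecoef10 ecoef00 !ecoef_eq0 // mulr0 addr0 mul0r addr0.
  have -> : 2 - 1 = 1 :> int by [].
  by rewrite expr1z mulNr AB_Xn_sub; ring.
rewrite -mulNr (power_sum_wsum qbr_scaled_neq0 c_pascal Xn_add Xn_mul e0 e1).
rewrite big_mkord mulr_sumr; apply: eq_bigr => k _.
rewrite /c cpolE Xn_sub expz_div.
have -> : - (l%:Z * (2 * (m%:Z - k%:Z) + 1)) = - (l%:Z * (2 * (m%:Z - k%:Z) - 1)) - 2 * l%:Z by lia.
by rewrite expz_subl; ring.
Qed.

Lemma Xn_pow_add m :
  Xn q l ^+ m + Xn q n ^+ m =
  \sum_(0 <= k < m.+1)
    gpol m%:Z (m%:Z - k%:Z) q * qbr q l ^ (2 * (m%:Z - k%:Z)) * q ^ (- (l%:Z * (m%:Z - k%:Z))).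
Proof.
have e0 : 1 + 1 = 1 * wsum V 0 (fun i => gcoef q i) 0.
  by rewrite wsum0 /= gcoefn0 expr0 !mul1r mulr1.
have e1 : 1 * Xn q l + 1 * Xn q n = 1 * wsum V 0 (fun i => gcoef q i) 1.
  rewrite wsum1 /= gcoefn0 gcoef_eq0 // mul0r !addr0 !mul1r expr1.
  by rewrite -[V ^ 2]/(V ^+ 2) -Xn_add.
have := power_sum_wsum qbr_scaled_neq0 (gcoef_pascal q) Xn_add Xn_mul e0 e1 m.
rewrite !mul1r => ->.
rewrite big_mkord; apply: eq_bigr => k _.
rewrite gpolE addr0 expz_div expz_sqr.
have -> : 2 * - (l%:Z * (m%:Z - k%:Z)) = - (l%:Z * (2 * (m%:Z - k%:Z))) by lia.
by ring.
Qed.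

Lemma AB_Xn_pow_add m :
  A * Xn q l ^+ m + B * Xn q n ^+ m =
  \sum_(0 <= k < m.+2)
    dpol m.+1%:Z (m.+1%:Z - k%:Z) t
    * qbr q l ^ (2 * (m.+1%:Z - k%:Z) - 1) * t ^ (- (l%:Z * (2 * (m.+1%:Z - k%:Z) - 1))).
Proof.
pose c (i k : nat) := gcoef q i.+1 k + t * gcoef q i k.
have c_pascal : pascal_rec q c := pascal_rec_lincomb t (gcoef_succ_pascal q) (gcoef_pascal q).
have e0 : A + B = 1 * wsum V 1 c 0.
  by rewrite wsum0 /c !gcoefn0 expr1z mul1r AB_add; ring.
have e1 : A * Xn q l + B * Xn q n = 1 * wsum V 1 c 1.
  rewrite wsum1 /c !gcoefn0 gcoef21 gcoef_eq0 // mulr0 addr0 mul1r.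
  have -> : 2 + 1 = 3 :> int by [].
  by rewrite expr1z -[V ^ 3]/(V ^+ 3) AB_Xn_add; ring.
rewrite (power_sum_wsum qbr_scaled_neq0 c_pascal Xn_add Xn_mul e0 e1) mul1r.
rewrite big_mkord big_ord_recr /= dpolE !gcoef_eq0 ?mulr0 ?addr0 ?mul0r ?addr0; try lia.
apply: eq_bigr => k _; rewrite dpolE expz_div.
have -> : m.+1%:Z - 1 = m by lia.
have -> : 2 * (m.+1%:Z - k%:Z) - 1 = 2 * (m%:Z - k%:Z) + 1 by lia.
by rewrite /c; ring.
Qed.

End QIdentities.

Lemma tind_neq0 : tind != 0.
Proof. by rewrite tofrac_eq0 polyX_eq0. Qed.

Lemma tind_pow_neq1 k : (0 < k)%N -> 1 - tind ^+ k != 0.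
Proof.
move=> k_gt0; rewrite /tind -tofracXn -tofrac1 -tofracB tofrac_eq0.
apply/eqP => /(congr1 (coefp 0)) /=.
by rewrite coefB coef1 coefXn (ltn_eqF k_gt0) subr0 coef0 => /eqP; rewrite oner_eq0.
Qed.

Unset Implicit Arguments.

Theorem lemma2p2 (m l : nat) : (1 <= m)%N -> (1 <= l)%N ->
  let t := tind in
  let q := t ^+ 2 in
  let X := Xn q in
  (* (1 - q^{l+1/2}) / ((1 - q^{1/2}) q^{l/2}) and its l-1 analogue *)
  let A := (1 - t ^+ (2 * l + 1)) / ((1 - t) * t ^+ l) in
  let B := (1 - t ^+ (2 * l - 1)) / ((1 - t) * t ^+ (l - 1)) in
  [/\ X l ^+ m.+1 - X l.-1 ^+ m.+1 =
        \sum_(0 <= k < m.+1)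
          hh (m%:Z - 2 * k%:Z) (k%:Z + 1) (k%:Z + 1) q * qbr q (2 * l)
          * qbr q l ^ (2 * (m%:Z - k%:Z)) * q ^ (- (l%:Z * (m%:Z - k%:Z + 1))),
      A * X l ^+ m - B * X l.-1 ^+ m =
        \sum_(0 <= k < m.+1)
          cpol m%:Z (m%:Z - k%:Z) t * qbr q (2 * l)
          * qbr q l ^ (2 * (m%:Z - k%:Z) - 1)
          * t ^ (- (l%:Z * (2 * (m%:Z - k%:Z) + 1))),
      X l ^+ m + X l.-1 ^+ m =
        \sum_(0 <= k < m.+1)
          gpol m%:Z (m%:Z - k%:Z) q
          * qbr q l ^ (2 * (m%:Z - k%:Z)) * q ^ (- (l%:Z * (m%:Z - k%:Z)))
    & A * X l ^+ m.-1 + B * X l.-1 ^+ m.-1 =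
        \sum_(0 <= k < m.+1)
          dpol m%:Z (m%:Z - k%:Z) t
          * qbr q l ^ (2 * (m%:Z - k%:Z) - 1)
          * t ^ (- (l%:Z * (2 * (m%:Z - k%:Z) - 1)))].
Proof.
case: m => [//|m] _; case: l => [//|n] _ t q X A B.
have subql_neq0 : 1 - t ^+ (2 * n.+1) != 0 by rewrite tind_pow_neq1 ?muln_gt0.
split.
- exact: Xn_pow_sub tind_neq0 subql_neq0 m.+1.
- exact: AB_Xn_pow_sub tind_neq0 subql_neq0 m.+1.
- exact: Xn_pow_add tind_neq0 subql_neq0 m.+1.
- exact: AB_Xn_pow_add tind_neq0 subql_neq0 m.
Qed.
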